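(* Let $m\ge2$, $N=2m$, and let $G$ be the ''dense center'' graph: vertices $c_1,\dots,c_m$ forming a complete graph, together with leaves $\ell_1,\dots,\ell_m$, where $\ell_j$ is adjacent only to $c_j$. Then $n_{\max}(G)=m$, the roots are $c_1,\dots,c_m$, and $\beta_C^G=\tfrac32N-1$. Let $\mathcal L\subseteq\{\ell_1,\dots,\ell_m\}$ with $|\mathcal L|<m$, let $j$ be such that $\ell_j\notin\mathcal L$, and $G'=G[V\setminus\mathcal L]$. Then $$\langle I_{c_j}^{G*}\rangle_\rho=\langle I_{c_j}^{G'*}\rangle_\rho=(2\sqrt2-1)m+N-1-(\sqrt2+1)|\mathcal L| .$$ Consequently $\langle I_{c_j}^{G'*}\rangle_\rho>\beta_C^{G'}$ if and only if $|\mathcal L|<\frac{\sqrt2-1}{\sqrt2}N$, and $\langle I_{c_j}^{G*}\rangle_\rho>\beta_C^{G}$ if and only if $|\mathcal L|<\frac{\sqrt2-1}{\sqrt2+1}N$.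
   Context: Qubits are labelled $1,\dots,N$; $X_i,Z_i$ denote the Pauli $X$ and $Z$ operators on qubit $i$. For a graph $H$ with vertex set $V(H)\subseteq\{1,\dots,N\}$, $\mathcal N_i^H$ is the neighbour set of $i$, $\overline{\mathcal N_i^H}=\mathcal N_i^H\cup\{i\}$, $n_{\max}(H)$ the maximum degree; a root is a vertex of degree $n_{\max}(H)$. $S_i^H=X_i\prod_{j\in\mathcal N_i^H}Z_j$. The graph state $|\phi^G\rangle$ is the unique state with $S_i^G|\phi^G\rangle=|\phi^G\rangle$ for all $i$. For a vertex $r$ of $H$, $I_r^{H*}=\sqrt2\,n_{\max}(H)S_r^H+\sqrt2\sum_{i\in\mathcal N_r^H}S_i^H+\sum_{i\in V(H)\setminus\overline{\mathcal N_r^H}}S_i^H$, and $\beta_C^H=n_{\max}(H)+|V(H)|-1$. For lost set $\mathcal L$, $G'=G[V\setminus\mathcal L]$ (labels kept, identity on $\mathcal L$) and $\rho=\mathrm{Tr}_{\mathcal L}(|\phi^G\rangle\langle\phi^G|)\otimes\bigotimes_{l\in\mathcal L}|0\rangle\langle0|_l$; $\langle A\rangle_\rho=\mathrm{Tr}(A\rho)$. *)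

From HB Require Import structures.
From mathcomp Require Import all_boot all_order all_algebra all_field.
Set Implicit Arguments. Unset Strict Implicit. Unset Printing Implicit Defensive.
Import Order.TTheory GRing.Theory Num.Theory.
Local Open Scope ring_scope.

(* Qubits are labelled by 'I_N (0-based: qubit i+1 of the paper is i).
   The computational basis of (C^2)^{\otimes N} is indexed by a : 'I_(2^N);
   the state of qubit i in basis vector a is the i-th binary digit of a. *)
Definition qbit (a i : nat) : bool := odd (a %/ 2 ^ i).

Section Ops.
Variable N : nat.
Notation Op := 'M[algC]_(2 ^ N).

Definition Xop (i : 'I_N) : Op :=
  \matrix_(a, b) ([forall k : 'I_N, qbit b k == (qbit a k (+) (k == i))] %:R).
Definition Zop (i : 'I_N) : Op :=
  \matrix_(a, b) ((a == b)%:R * (-1) ^+ qbit a i).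

Record graph := Graph { gV : {set 'I_N}; gadj : rel 'I_N }.

Definition nbrs (H : graph) (i : 'I_N) : {set 'I_N} :=
  [set j in gV H | gadj H i j && (j != i)].
Definition deg (H : graph) (i : 'I_N) : nat := #|nbrs H i|.
Definition nmax (H : graph) : nat := \max_(i in gV H) deg H i.
Definition is_root (H : graph) (r : 'I_N) : Prop := r \in gV H /\ deg H r = nmax H.

Definition induced (H : graph) (L : {set 'I_N}) : graph :=
  Graph (gV H :\: L) (gadj H).

Definition stab (H : graph) (i : 'I_N) : Op :=
  Xop i *m \big[mulmx/1%:M]_(j in nbrs H i) Zop j.

Definition Istar (H : graph) (r : 'I_N) : Op :=
  (sqrtC 2 * (nmax H)%:R) *: stab H r
  + sqrtC 2 *: (\sum_(i in nbrs H r) stab H i)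
  + \sum_(i in gV H :\: (r |: nbrs H r)) stab H i.

Definition betaC (H : graph) : algC := (nmax H)%:R + (#|gV H|)%:R - 1.

(* |phi^G> : a normalised joint +1 eigenvector of all S_i^G (unique up to phase) *)
Definition is_graph_state (G : graph) (psi : 'cV[algC]_(2 ^ N)) : Prop :=
  (forall i, i \in gV G -> stab G i *m psi = psi) /\
  \sum_a psi a 0 * (psi a 0)^* = 1.

Definition density (psi : 'cV[algC]_(2 ^ N)) : Op := psi *m (map_mx (fun x : algC => x^*) psi)^T.

Definition zero_on (L : {set 'I_N}) (a : nat) : bool := [forall l in L, ~~ qbit a l].
Definition agree_off (L : {set 'I_N}) (a b : nat) : bool :=
  [forall k : 'I_N, (k \notin L) ==> (qbit a k == qbit b k)].
Definition agree_on (L : {set 'I_N}) (a b : nat) : bool :=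
  [forall k in L, qbit a k == qbit b k].

(* Tr_L(P) \otimes \bigotimes_{l in L} |0><0|_l :
   entry (a,b) = [a_L = b_L = 0] * \sum_z P (a_{V\L} z) (b_{V\L} z) *)
Definition trace_out_reset (L : {set 'I_N}) (P : Op) : Op :=
  \matrix_(a, b)
    (if zero_on L a && zero_on L b then
       \sum_(a' : 'I_(2 ^ N) | agree_off L a a') \sum_(b' : 'I_(2 ^ N) | agree_off L b b' && agree_on L a' b')
          P a' b'
     else 0).

Definition lost_state (L : {set 'I_N}) (psi : 'cV[algC]_(2 ^ N)) : Op :=
  trace_out_reset L (density psi).

Definition expect (A rho : Op) : algC := \tr (A *m rho).

(* Dense center graph: centers c_k = k (k < m) form K_m; leaf l_k = m + k
   is adjacent only to c_k.  Intended with N = 2m. *)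
Definition dense_center (m : nat) : graph :=
  Graph [set: 'I_N]
    (fun i j : 'I_N => (i != j) &&
       [|| (i < m)%N && (j < m)%N, (i + m == j)%N | (j + m == i)%N]).

Definition leaves (m : nat) : {set 'I_N} := [set i : 'I_N | (m <= i)%N].

End Ops.

(* Tracing out the lost qubits L and resetting them to |0> kills the expectation of
   every stabilizer S_i with i in L, and turns that of S_i with i outside L into the
   graph-state expectation of X_i prod_(k in N_i \ L) Z_k: the Z's on lost neighbours
   disappear.  In the dense center graph the only neighbour of a centre c_k that can be
   lost is its leaf l_k.  If it is kept, the operator is S_(c_k) itself and has value 1;
   if it is lost, the operator anticommutes with S_(l_k) = X_(l_k) Z_(c_k) and has value 0.
   Hence <S_i>_rho = 1 exactly when neither vertex of the pair {c_k, l_k} containing i is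
   lost, and counting pairs gives the value of <I_(c_j)^G*>_rho.  Passing to G' only
   drops vertices whose terms vanish and keeps n_max = m, so the value is unchanged;
   the two threshold statements are then linear inequalities in |L|. *)

From HB Require Import structures.
From mathcomp Require Import all_boot all_order all_algebra all_field.
From mathcomp Require Import zify ring.
Import Order.TTheory GRing.Theory Num.Theory.
Local Open Scope ring_scope.
Set Implicit Arguments. Unset Strict Implicit. Unset Printing Implicit Defensive.

Lemma nat_bits_inj n a b : (a < 2 ^ n)%N -> (b < 2 ^ n)%N ->
  (forall k, (k < n)%N -> odd (a %/ 2 ^ k) = odd (b %/ 2 ^ k)) -> a = b.
Proof.
elim: n a b => [|n IHn] a b; first by rewrite expn0 !ltnS !leqn0 => /eqP-> /eqP->.
move=> ha hb eq_bits; rewrite -(odd_double_half a) -(odd_double_half b).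
have := eq_bits 0%N isT; rewrite !expn0 !divn1 => ->.
congr (_ + _.*2)%N; apply: IHn; rewrite -?divn2 ?ltn_divLR // -?expnSr //.
by move=> k lt_kn; rewrite -!divnMA -expnS; apply: eq_bits.
Qed.

Section BitBasis.
Variable N : nat.
Notation word := {ffun 'I_N -> bool}.

Definition bits (a : 'I_(2 ^ N)) : word := [ffun k : 'I_N => qbit a k].

Lemma bits_inj : injective bits.
Proof.
move=> a b /ffunP eq_ab; apply/val_inj/(@nat_bits_inj N); rewrite ?ltn_ord // => k lt_kN.
by have := eq_ab (Ordinal lt_kN); rewrite !ffunE.
Qed.

Lemma bits_codom (f : word) : f \in codom bits.
Proof.
apply: inj_card_onto; first exact: bits_inj.
by rewrite card_ffun card_bool !card_ord.
Qed.

Definition of_bits (f : word) : 'I_(2 ^ N) := iinv (bits_codom f).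

Lemma of_bitsK : cancel of_bits bits.
Proof. by move=> f; rewrite f_iinv. Qed.

Lemma bitsK : cancel bits of_bits.
Proof. by move=> a; apply: bits_inj; rewrite of_bitsK. Qed.

Lemma qbit_of_bits (f : word) (k : 'I_N) : qbit (of_bits f) k = f k.
Proof. by rewrite -[in RHS](of_bitsK f) ffunE. Qed.

Lemma reindex_of_bits (V : nmodType) (P : pred 'I_(2 ^ N)) (F : 'I_(2 ^ N) -> V) :
  \sum_(a | P a) F a = \sum_(f : word | P (of_bits f)) F (of_bits f).
Proof. exact/reindex/onW_bij/(Bijective of_bitsK bitsK). Qed.

End BitBasis.

Lemma sum_delta_mull (I : finType) (b : I) (F : I -> algC) :
  \sum_c (c == b)%:R * F c = F b.
Proof.
rewrite (bigD1 b) //= eqxx mul1r big1 ?addr0 // => c /negbTE ->.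
by rewrite mul0r.
Qed.

Section PauliEntries.
Variable N : nat.
Notation word := {ffun 'I_N -> bool}.
Notation Op := 'M[algC]_(2 ^ N).

Definition flip (f : word) (i : 'I_N) : word := [ffun k => f k (+) (k == i)].
Definition zsign (S : {set 'I_N}) (f : word) : algC := \prod_(k in S) (-1) ^+ f k.

Lemma flipK i : involutive (flip^~ i).
Proof. by move=> f; apply/ffunP => k; rewrite !ffunE addbK. Qed.

Lemma flip_out (f : word) i k : k != i -> flip f i k = f k.
Proof. by move=> /negbTE ki; rewrite ffunE ki addbF. Qed.

Lemma Xop_bits i f g : Xop i (of_bits f) (of_bits g) = (g == flip f i)%:R.
Proof.
rewrite mxE; congr (nat_of_bool _)%:R; apply/forallP/eqP => [eq_fg | ->] /=.
  by apply/ffunP => k; have /eqP := eq_fg k; rewrite !qbit_of_bits ffunE.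
by move=> k; rewrite !qbit_of_bits ffunE.
Qed.

Lemma big_mulmx_Zop (s : seq 'I_N) (P : pred 'I_N) :
  \big[mulmx/1%:M]_(k <- s | P k) Zop k =
  \matrix_(a, b) ((a == b)%:R * \prod_(k <- s | P k) (-1) ^+ qbit a k) :> Op.
Proof.
elim: s => [|x s IHs]; apply/matrixP => a b.
  by rewrite big_nil !mxE big_nil mulr1.
rewrite big_cons [RHS]mxE big_cons; case: (P x); last by rewrite IHs mxE.
rewrite IHs !mxE (bigD1 a) //= [X in _ + X]big1 => [|c ca]; last first.
  by rewrite !mxE eq_sym (negbTE ca) !mul0r.
by rewrite !mxE eqxx mul1r addr0 mulrCA.
Qed.

Lemma stab_bits (H : graph N) i f g :
  stab H i (of_bits f) (of_bits g) = (g == flip f i)%:R * zsign (nbrs H i) g.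
Proof.
rewrite /stab big_mulmx_Zop mxE (reindex_of_bits xpredT).
under eq_bigr => h _ do rewrite Xop_bits mxE (can_eq (@of_bitsK N)) mulrA -natrM.
rewrite (bigD1 g) //= [X in _ + X]big1 => [|h hg]; last first.
  by rewrite (negbTE hg) muln0 mul0r.
rewrite eqxx muln1 addr0; congr (_ * _).
by apply: eq_bigr => k _; rewrite qbit_of_bits.
Qed.

End PauliEntries.

Section Amplitudes.
Variables (N : nat) (psi : 'cV[algC]_(2 ^ N)).
Notation word := {ffun 'I_N -> bool}.

Definition amp (f : word) : algC := psi (of_bits f) 0.

Definition xz_expect (S : {set 'I_N}) (i : 'I_N) : algC :=
  \sum_f zsign S (flip f i) * amp (flip f i) * (amp f)^*.

End Amplitudes.

Section LostState.
Variables (N : nat) (L : {set 'I_N}) (psi : 'cV[algC]_(2 ^ N)).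
Notation word := {ffun 'I_N -> bool}.

Definition zero_on_bits (f : word) := [forall l in L, ~~ f l].
Definition agree_off_bits (f g : word) := [forall k, (k \notin L) ==> (f k == g k)].
Definition agree_on_bits (f g : word) := [forall k in L, f k == g k].
Definition reset (f : word) : word := [ffun k => (k \notin L) && f k].

Lemma lost_state_bits f g : lost_state L psi (of_bits f) (of_bits g) =
  if zero_on_bits f && zero_on_bits g then
    \sum_(a | agree_off_bits f a) \sum_(b | agree_off_bits g b && agree_on_bits a b)
      amp psi a * (amp psi b)^*
  else 0.
Proof.
have zero_onE h : zero_on L (of_bits h) = zero_on_bits h.
  by apply: eq_forallb => k; rewrite qbit_of_bits.
have agree_offE h h' : agree_off L (of_bits h) (of_bits h') = agree_off_bits h h'.
  by apply: eq_forallb => k; rewrite !qbit_of_bits.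
have agree_onE h h' : agree_on L (of_bits h) (of_bits h') = agree_on_bits h h'.
  by apply: eq_forallb => k; rewrite !qbit_of_bits.
rewrite mxE !zero_onE; case: ifP => // _.
rewrite reindex_of_bits; apply: eq_big => [a|a _]; first by rewrite agree_offE.
rewrite reindex_of_bits; apply: eq_big => [b|b _]; first by rewrite agree_offE agree_onE.
by rewrite !mxE big_ord1 !mxE.
Qed.

Section Flip.
Variable i : 'I_N.
Hypothesis iNL : i \notin L.

Lemma in_L_neq k : k \in L -> (k == i) = false.
Proof. by move=> kL; apply/negbTE; apply: contraNneq iNL => <-. Qed.

Lemma zero_on_bits_flip f : zero_on_bits (flip f i) = zero_on_bits f.
Proof.
by apply: eq_forallb => k; apply: implyb_id2l => kL; rewrite ffunE in_L_neq ?addbF.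
Qed.

Lemma lost_state_support (f a b : word) :
  [&& zero_on_bits f, agree_off_bits (flip f i) a, agree_off_bits f b & agree_on_bits a b]
  = (f == reset b) && (a == flip b i).
Proof.
apply/and4P/andP => [[/forallP f0 /forallP fa /forallP fb /forallP ab] | [/eqP-> /eqP->]].
  split; apply/eqP/ffunP => k; rewrite !ffunE; have := f0 k; have := fa k;
    have := fb k; have := ab k; case: (boolP (k \in L)) => kL //=.
  - by move=> _ _ _ /negbTE.
  - by move=> _ /eqP.
  - by rewrite in_L_neq // addbF => /eqP.
  - by rewrite ffunE => _ /eqP-> /eqP<-.
split; apply/forallP => k; case: (boolP (k \in L)) => kL; rewrite ?ffunE ?kL //=.
by rewrite in_L_neq ?addbF.
Qed.

Lemma sum_lost_state_support (F : word -> word -> word -> algC) :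
  \sum_f (if zero_on_bits f then
            \sum_(a | agree_off_bits (flip f i) a)
              \sum_(b | agree_off_bits f b && agree_on_bits a b) F f a b
          else 0)
  = \sum_b F (reset b) (flip b i) b.
Proof.
have pick1 (x : word) (P : bool) (E : word -> algC) :
    \sum_y (if (y == x) && P then E y else 0) = if P then E x else 0.
  by rewrite (bigD1 x) //= eqxx big1 ?addr0 // => y /negbTE ->.
transitivity (\sum_f \sum_a \sum_b
  (if [&& zero_on_bits f, agree_off_bits (flip f i) a, agree_off_bits f b & agree_on_bits a b]
   then F f a b else 0)).
  apply: eq_bigr => f _; case: (zero_on_bits f); last by rewrite big1 // => a _; rewrite big1.
  rewrite big_mkcond; apply: eq_bigr => a _.
  by case: (agree_off_bits _ a); rewrite ?big_mkcond // big1.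
rewrite exchange_big; under eq_bigr do rewrite exchange_big; rewrite exchange_big.
apply: eq_bigr => b _; under eq_bigr do under eq_bigr do rewrite lost_state_support.
by under eq_bigr do rewrite pick1; rewrite -big_mkcond big_pred1_eq.
Qed.

Lemma zsign_reset (S : {set 'I_N}) b :
  zsign (S :\: L) (flip b i) = zsign S (flip (reset b) i).
Proof.
rewrite /zsign big_mkcond [RHS]big_mkcond; apply: eq_bigr => k _.
rewrite !ffunE inE; case: (boolP (k \in L)) => kL //=.
by rewrite in_L_neq //; case: (k \in S).
Qed.

Lemma expect_stab_lost (H : graph N) :
  expect (stab H i) (lost_state L psi) = xz_expect psi (nbrs H i :\: L) i.
Proof.
rewrite /expect /mxtrace (reindex_of_bits xpredT).
under eq_bigr => f _ do rewrite mxE (reindex_of_bits xpredT).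
under eq_bigr => f _ do under eq_bigr do rewrite stab_bits -mulrA.
under eq_bigr => f _ do rewrite sum_delta_mull lost_state_bits zero_on_bits_flip andbb.
rewrite /xz_expect; under [RHS]eq_bigr => b _ do rewrite zsign_reset -mulrA.
apply: etrans _ (sum_lost_state_support
  (fun f a b => zsign (nbrs H i) (flip f i) * (amp psi a * (amp psi b)^*))).
apply: eq_bigr => f _; case: (zero_on_bits f); last by rewrite mulr0.
by rewrite big_distrr; apply: eq_bigr => a _; rewrite big_distrr.
Qed.

End Flip.

Lemma expect_stab_lost_on (H : graph N) i : i \in L ->
  expect (stab H i) (lost_state L psi) = 0.
Proof.
move=> iL; rewrite /expect /mxtrace big1 // => a _; rewrite mxE big1 // => b _.
rewrite -(bitsK a) -(bitsK b) stab_bits lost_state_bits.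
case: eqP => [-> | _]; last by rewrite !mul0r.
case: ifP => [/andP [/forallP flip0 /forallP f0] | _]; last by rewrite mulr0.
by have := flip0 i; have := f0 i; rewrite iL [flip _ _ _]ffunE eqxx addbT; case: (bits a i).
Qed.

End LostState.

Section GraphStateExpectations.
Variables (N : nat) (psi : 'cV[algC]_(2 ^ N)).
Hypothesis psi_norm : \sum_a psi a 0 * (psi a 0)^* = 1.

Lemma stab_fixed_amp (H : graph N) i : stab H i *m psi = psi ->
  forall f, zsign (nbrs H i) (flip f i) * amp psi (flip f i) = amp psi f.
Proof.
move=> Si_psi f; rewrite /amp -[in RHS]Si_psi mxE (reindex_of_bits xpredT).
by under eq_bigr do rewrite stab_bits -mulrA; rewrite sum_delta_mull.
Qed.

Lemma xz_expect_stab (H : graph N) i : stab H i *m psi = psi ->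
  xz_expect psi (nbrs H i) i = 1.
Proof.
move=> Si_psi; rewrite -psi_norm (reindex_of_bits xpredT).
by apply: eq_bigr => f _; rewrite (stab_fixed_amp Si_psi).
Qed.

(* X_c Z_(N_c \ l) = S_c Z_l anticommutes with S_l = X_l Z_c: the summand is
   (-1)^(f l) |psi_f|^2, and flipping bit l keeps |psi_f|^2 but changes the sign. *)
Lemma xz_expect_pendant (H : graph N) c l :
  stab H c *m psi = psi -> stab H l *m psi = psi ->
  l \in nbrs H c -> nbrs H l = [set c] ->
  xz_expect psi (nbrs H c :\ l) c = 0.
Proof.
move=> Sc_psi Sl_psi l_nbr_c nbrs_l.
have lc : l != c by move: l_nbr_c; rewrite inE => /and3P [].
have zsignD g : zsign (nbrs H c :\ l) g = (-1) ^+ g l * zsign (nbrs H c) g.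
  rewrite /zsign (bigD1 l l_nbr_c) /= mulrA -expr2 sqrr_sign mul1r.
  by apply: eq_bigl => k; rewrite in_setD1 andbC.
have normE f : amp psi (flip f l) * (amp psi (flip f l))^* = amp psi f * (amp psi f)^*.
  rewrite -[in RHS](stab_fixed_amp Sl_psi f) nbrs_l /zsign big_set1 flip_out 1?eq_sym //.
  by rewrite rmorphM rmorph_sign mulrACA -expr2 sqrr_sign mul1r.
have summandE f :
    zsign (nbrs H c :\ l) (flip f c) * amp psi (flip f c) * (amp psi f)^*
    = (-1) ^+ f l * (amp psi f * (amp psi f)^*).
  by rewrite zsignD flip_out // -!mulrA (mulrA (zsign _ _)) stab_fixed_amp.
rewrite /xz_expect; under eq_bigr do rewrite summandE.
apply/eqP; rewrite -eqNr -sumrN; apply/eqP.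
rewrite (reindex_inj (can_inj (flipK l))); apply: eq_bigr => f _.
rewrite normE [flip f l l]ffunE eqxx addbT.
by case: (f l); rewrite ?mulN1r ?mul1r ?opprK.
Qed.

End GraphStateExpectations.

Lemma expect_Istar (N : nat) (H : graph N) r (rho : 'M[algC]_(2 ^ N)) :
  expect (Istar H r) rho =
    sqrtC 2 * (nmax H)%:R * expect (stab H r) rho
    + sqrtC 2 * \sum_(i in nbrs H r) expect (stab H i) rho
    + \sum_(i in gV H :\: (r |: nbrs H r)) expect (stab H i) rho.
Proof.
by rewrite /expect !mulmxDl !mxtraceD -!scalemxAl !mxtraceZ !mulmx_suml !raddf_sum.
Qed.

Lemma nmax_eq_deg (N : nat) (H : graph N) r k :
  r \in gV H -> deg H r = k -> (forall i, i \in gV H -> deg H i <= k)%N -> nmax H = k.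
Proof.
move=> rH <- deg_le; apply/eqP; rewrite eqn_leq (leq_bigmax_cond _ rH) andbT.
exact/bigmax_leqP.
Qed.

Section InducedLost.
Variables (N : nat) (L : {set 'I_N}) (psi : 'cV[algC]_(2 ^ N)) (H : graph N).
Notation rho := (lost_state L psi).
Notation H' := (induced H L).

Lemma nbrs_induced i : nbrs H' i = nbrs H i :\: L.
Proof. by apply/setP => k; rewrite !inE /=; case: (k \in L). Qed.

Lemma expect_stab_induced i : expect (stab H' i) rho = expect (stab H i) rho.
Proof.
have [iL | iNL] := boolP (i \in L); first by rewrite !expect_stab_lost_on.
by rewrite !expect_stab_lost // nbrs_induced setDDl setUid.
Qed.

Lemma sum_expect_stab_setDl (A : {set 'I_N}) :
  \sum_(i in A :\: L) expect (stab H i) rho = \sum_(i in A) expect (stab H i) rho.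
Proof.
rewrite [RHS](big_setID L) /= [X in _ = X + _]big1 ?add0r // => i /setIP [_ iL].
exact: expect_stab_lost_on.
Qed.

Lemma expect_Istar_induced r : nmax H' = nmax H ->
  expect (Istar H' r) rho = expect (Istar H r) rho.
Proof.
move=> nmax_H'; rewrite !expect_Istar nmax_H' !expect_stab_induced.
under eq_bigr do rewrite expect_stab_induced.
under [in X in _ + X]eq_bigr do rewrite expect_stab_induced.
rewrite nbrs_induced !sum_expect_stab_setDl.
have -> : gV H' :\: (r |: (nbrs H r :\: L)) = (gV H :\: (r |: nbrs H r)) :\: L.
  by apply/setP => k; rewrite !inE; case: (k \in L); rewrite ?andbF.
by rewrite sum_expect_stab_setDl.
Qed.

End InducedLost.

Section DenseCenter.
Variables m N : nat.
Hypothesis hN : N = (2 * m)%N.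
Notation G := (dense_center N m).

Lemma ltn_2m (i : 'I_N) : (i < 2 * m)%N.
Proof. by rewrite -hN. Qed.

Definition partner (i : 'I_N) : 'I_N :=
  Ordinal (ltn_pmod (i + m) (leq_ltn_trans (leq0n i) (ltn_ord i))).

Lemma partner_val (i : 'I_N) :
  val (partner i) = if (i < m)%N then (i + m)%N else (i - m)%N.
Proof.
rewrite /=; move: (nat_of_ord i) (ltn_ord i) => n; rewrite hN => lt_n2m.
case: ifP => lt_nm; first by rewrite modn_small //; lia.
have -> : (n + m = 1 * (2 * m) + (n - m))%N by lia.
by rewrite modnMDl modn_small //; lia.
Qed.

Lemma partnerK : involutive partner.
Proof.
move=> i; apply: val_inj; have := ltn_2m i.
by rewrite !partner_val; case: (ltnP i m) => /= lt_im; case: ifP; lia.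
Qed.

Lemma partner_center (i : 'I_N) : (partner i < m)%N = ~~ (i < m)%N.
Proof. by have := ltn_2m i; rewrite partner_val; case: ifP; lia. Qed.

Lemma partner_neq (i : 'I_N) : partner i != i.
Proof. by have := ltn_2m i; rewrite -val_eqE partner_val /=; case: ifP; lia. Qed.

Lemma nbrs_center (i k : 'I_N) : (i < m)%N ->
  (k \in nbrs G i) = (k != i) && ((k < m)%N || (k == partner i)).
Proof.
by move=> lt_im; have := ltn_2m k; rewrite !inE /= -!val_eqE partner_val lt_im /=; lia.
Qed.

Lemma nbrs_leaf (l : 'I_N) : (m <= l)%N -> nbrs G l = [set partner l].
Proof.
move=> le_ml; apply/setP => k; have := ltn_2m k; have := ltn_2m l.
by rewrite !inE /= -!val_eqE partner_val /=; case: ifP; lia.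
Qed.

Lemma sum_pairs (V : nmodType) (F : 'I_N -> V) :
  \sum_i F i = \sum_(i : 'I_N | (i < m)%N) (F i + F (partner i)).
Proof.
rewrite (bigID (fun i : 'I_N => (i < m)%N)) big_split /=; congr (_ + _).
rewrite (reindex_inj (can_inj partnerK)); apply: eq_bigl => i.
by rewrite partner_center negbK.
Qed.

Lemma card_pairs (A : {set 'I_N}) :
  #|A| = \sum_(i : 'I_N | (i < m)%N) ((i \in A) + (partner i \in A))%N.
Proof. by rewrite -sum1_card big_mkcond sum_pairs; apply: eq_bigr => i _; do 2!case: ifP. Qed.

Lemma sum_centers1 : \sum_(i : 'I_N | (i < m)%N) 1%N = m.
Proof.
have := card_pairs setT; rewrite cardsT card_ord.
under eq_bigr do rewrite !inE.
by rewrite !sum_nat_const hN /=; lia.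
Qed.

Lemma partner_center_neq (i c : 'I_N) : (i < m)%N -> (c < m)%N -> (partner i == c) = false.
Proof.
move=> lt_im lt_cm; apply/negbTE/eqP => pic.
by move: (partner_center i); rewrite pic lt_cm lt_im.
Qed.

Lemma deg_center (c : 'I_N) : (c < m)%N -> deg G c = m.
Proof.
move=> lt_cm; rewrite /deg card_pairs -[RHS]sum_centers1; apply: eq_bigr => i lt_im.
rewrite !nbrs_center // lt_im partner_center lt_im (can_eq partnerK) partner_center_neq //=.
by case: eqP.
Qed.

Lemma deg_leaf (l : 'I_N) : (m <= l)%N -> deg G l = 1%N.
Proof. by move=> le_ml; rewrite /deg nbrs_leaf // cards1. Qed.

Lemma deg_dense_center_le (i : 'I_N) : (0 < m)%N -> (deg G i <= m)%N.
Proof. by move=> m_gt0; case: (ltnP i m) => [/deg_center-> | /deg_leaf->]. Qed.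

Lemma nmax_dense_center : (0 < m)%N -> nmax G = m.
Proof.
move=> m_gt0; have lt0N : (0 < N)%N by rewrite hN; lia.
apply: (@nmax_eq_deg _ _ (Ordinal lt0N)); rewrite ?inE ?deg_center //.
by move=> i _; apply: deg_dense_center_le.
Qed.

Lemma is_root_dense_center (v : 'I_N) : (1 < m)%N -> is_root G v <-> (v < m)%N.
Proof.
move=> m_gt1; rewrite /is_root nmax_dense_center ?inE; last by lia.
split=> [[_] | lt_vm]; last by rewrite deg_center.
by case: (ltnP v m) => // le_mv; rewrite deg_leaf //; lia.
Qed.

End DenseCenter.

Section LostLeaves.
Variables (m N : nat) (L : {set 'I_N}) (psi : 'cV[algC]_(2 ^ N)) (j : 'I_N).
Hypothesis hN : N = (2 * m)%N.
Hypothesis L_leaves : L \subset leaves N m.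
Hypothesis lt_jm : (j < m)%N.
Hypothesis leaf_j_kept : forall l : 'I_N, l \in L -> val l <> (m + j)%N.
Hypothesis psi_graph_state : is_graph_state (dense_center N m) psi.
Notation G := (dense_center N m).
Notation rho := (lost_state L psi).

Lemma lost_ge_m (l : 'I_N) : l \in L -> (m <= l)%N.
Proof. by move=> /(subsetP L_leaves); rewrite inE. Qed.

Lemma center_notin_L (i : 'I_N) : (i < m)%N -> i \notin L.
Proof. by move=> lt_im; apply/negP => /lost_ge_m; lia. Qed.

Lemma partner_notin_L : partner m j \notin L.
Proof. by apply/negP => /leaf_j_kept; rewrite (partner_val hN) lt_jm addnC. Qed.

Lemma expect_stab_dense_center i :
  expect (stab G i) rho = ((i \notin L) && (partner m i \notin L))%:R.
Proof.
have [stab_psi psi_norm] := psi_graph_state.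
have S_psi k : stab G k *m psi = psi by rewrite stab_psi ?inE.
have [iL | iNL] := boolP (i \in L); first by rewrite expect_stab_lost_on.
rewrite expect_stab_lost //=.
have [lt_im | le_mi] := ltnP i m; last first.
  have lt_pim : (partner m i < m)%N by rewrite (partner_center hN) -leqNgt.
  rewrite (center_notin_L lt_pim) (setDidPl _) ?xz_expect_stab //.
  by rewrite (nbrs_leaf hN) // disjoints1 center_notin_L.
have nbr_notin_L k : k \in nbrs G i -> k != partner m i -> k \notin L.
  rewrite nbrs_center // => /andP [_ /orP [/center_notin_L // | /eqP->]].
  by rewrite eqxx.
have [pL | pNL] := boolP (partner m i \in L); last first.
  rewrite (setDidPl _) ?xz_expect_stab // disjoint_subset; apply/subsetP => k kN.
  by rewrite inE; case: (eqVneq k (partner m i)) => [-> // | /(nbr_notin_L _ kN)].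
have -> : nbrs G i :\: L = nbrs G i :\ partner m i.
  apply/setP => k; rewrite in_setD in_setD1.
  have [kN | _] := boolP (k \in nbrs G i); rewrite ?andbF ?andbT //.
  by case: eqP => [-> | /eqP /(nbr_notin_L _ kN)->]; rewrite ?pL.
have le_mp : (m <= partner m i)%N by rewrite leqNgt (partner_center hN) lt_im.
rewrite (xz_expect_pendant (S_psi _) (S_psi _)) //.
  by rewrite (nbrs_center hN) // (partner_neq hN) eqxx orbT.
by rewrite (nbrs_leaf hN le_mp) partnerK.
Qed.

Lemma expect_stab_partner i : expect (stab G (partner m i)) rho = expect (stab G i) rho.
Proof. by rewrite !expect_stab_dense_center (partnerK hN) andbC. Qed.

Lemma sum_expect_stab_centers :
  \sum_(i : 'I_N | (i < m)%N) expect (stab G i) rho = m%:R - #|L|%:R.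
Proof.
rewrite (card_pairs hN) -[in X in X%:R - _](sum_centers1 hN) !natr_sum -sumrB.
apply: eq_bigr => i lt_im.
rewrite expect_stab_dense_center (negbTE (center_notin_L lt_im)) /=.
by case: (partner m i \in L); rewrite ?subrr ?subr0.
Qed.

Lemma sum_expect_stab_nbrs : \sum_(i in nbrs G j) expect (stab G i) rho = m%:R - #|L|%:R.
Proof.
rewrite -sum_expect_stab_centers big_mkcond (sum_pairs hN); apply: eq_bigr => i lt_im.
rewrite expect_stab_partner !(nbrs_center hN) // lt_im (partner_center hN) lt_im.
rewrite (partner_center_neq hN) // (can_eq (partnerK hN)) /=.
by case: eqP; rewrite ?addr0 ?add0r.
Qed.

Lemma sum_expect_stab_far :
  \sum_(i in [set: 'I_N] :\: (j |: nbrs G j)) expect (stab G i) rho = m%:R - #|L|%:R - 1.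
Proof.
rewrite -sum_expect_stab_centers [in RHS](bigD1 j) //= expect_stab_dense_center.
rewrite (center_notin_L lt_jm) partner_notin_L [1 + _]addrC addrK.
rewrite big_mkcond (sum_pairs hN) big_mkcondr; apply: eq_bigr => i lt_im.
rewrite expect_stab_partner !in_setD !in_setT !in_setU1 !(nbrs_center hN) // lt_im.
rewrite (partner_center hN) lt_im (partner_center_neq hN) // (can_eq (partnerK hN)) /=.
by case: eqP; rewrite ?addr0 ?add0r.
Qed.

Lemma expect_Istar_dense_center :
  expect (Istar G j) rho =
    sqrtC 2 * m%:R + sqrtC 2 * (m%:R - #|L|%:R) + (m%:R - #|L|%:R - 1).
Proof.
rewrite expect_Istar (nmax_dense_center hN); last by lia.
rewrite sum_expect_stab_nbrs sum_expect_stab_far.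
by rewrite expect_stab_dense_center (center_notin_L lt_jm) partner_notin_L mulr1.
Qed.

Lemma nmax_induced_dense_center : nmax (induced G L) = m.
Proof.
have nbrs_jL : nbrs (induced G L) j = nbrs G j.
  rewrite nbrs_induced (setDidPl _) // disjoint_subset; apply/subsetP => k.
  rewrite (nbrs_center hN) // inE => /andP [_ /orP [/center_notin_L // | /eqP->]].
  exact: partner_notin_L.
apply: (@nmax_eq_deg _ _ j); first by rewrite !inE center_notin_L.
  by rewrite /deg nbrs_jL -/(deg G j) (deg_center hN).
move=> i _; rewrite /deg nbrs_induced (leq_trans (subset_leq_card (subsetDl _ _))) //.
by rewrite (deg_dense_center_le hN); lia.
Qed.

Lemma betaC_induced_dense_center :
  betaC (induced G L) = m%:R + N%:R - #|L|%:R - 1.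
Proof.
rewrite /betaC nmax_induced_dense_center /= setTD cardsCs setCK card_ord natrB ?addrA //.
by rewrite -[X in (_ <= X)%N]card_ord max_card.
Qed.

End LostLeaves.

Lemma ltr_iff_sub_pdiv (R : numFieldType) (x y l z d : R) :
  0 < d -> z - l = (y - x) / d -> (x < y <-> l < z).
Proof.
move=> d_gt0 zlE; rewrite -subr_gt0 -[l < z]subr_gt0 zlE pmulr_lgt0 ?invr_gt0 //.
Qed.

Theorem mainTheorem7 (m N : nat) (hm : (2 <= m)%N) (hN : N = (2 * m)%N) :
  let G := dense_center N m in
  nmax G = m /\
  (forall v : 'I_N, is_root G v <-> (v < m)%N) /\
  betaC G = 3 / 2 * N%:R - 1 /\
  (forall (L : {set 'I_N}) (j : 'I_N) (psi : 'cV[algC]_(2 ^ N)),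
     L \subset leaves N m -> (#|L| < m)%N -> (j < m)%N ->
     (forall l : 'I_N, l \in L -> val l <> (m + j)%N) ->
     is_graph_state G psi ->
     let rho := lost_state L psi in
     let G' := induced G L in
     expect (Istar G j) rho = expect (Istar G' j) rho /\
     expect (Istar G' j) rho =
       (2 * sqrtC (2 : algC) - 1) * m%:R + N%:R - 1 - (sqrtC (2 : algC) + 1) * #|L|%:R /\
     (betaC G' < expect (Istar G' j) rho <->
        #|L|%:R < (sqrtC (2 : algC) - 1) / sqrtC (2 : algC) * N%:R) /\
     (betaC G < expect (Istar G j) rho <->
        #|L|%:R < (sqrtC (2 : algC) - 1) / (sqrtC (2 : algC) + 1) * N%:R)).
Proof.
move=> G; have m_gt0 : (0 < m)%N by lia.
have betaG : betaC G = m%:R + N%:R - 1.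
  by rewrite /betaC nmax_dense_center // cardsT card_ord.
have N_2m : N%:R = 2 * m%:R :> algC by rewrite hN natrM.
have s_gt0 : 0 < sqrtC 2 :> algC by rewrite sqrtC_gt0.
have s1_gt0 : 0 < sqrtC 2 + 1 :> algC by rewrite addr_gt0.
split; first exact: nmax_dense_center.
split; first by move=> v; apply: is_root_dense_center.
split; first by rewrite betaG N_2m; field.
move=> L j psi L_leaves _ lt_jm lj_notin psiG rho G'.
have -> : expect (Istar G' j) rho = expect (Istar G j) rho.
  apply: expect_Istar_induced.
  by rewrite (nmax_induced_dense_center hN L_leaves lt_jm lj_notin) nmax_dense_center.
rewrite (expect_Istar_dense_center hN L_leaves lt_jm lj_notin psiG).
rewrite (betaC_induced_dense_center hN L_leaves lt_jm lj_notin) betaG N_2m.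
do 2!split=> //; first by ring.
by split; [apply: (ltr_iff_sub_pdiv s_gt0) | apply: (ltr_iff_sub_pdiv s1_gt0)];
  field; apply: lt0r_neq0.
Qed.
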